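(* In the big-action setting below, assume $n\ge2$ and that for all $i$ and all $y\in V$, $f_i(X+y)-f_i(X)\in\wp(k[X])$, so that $f_i(X)\equiv XS_i(X)+c_iX\bmod\wp(k[X])$ with $c_i\in k$ and $S_i(X)=\sum_{j=0}^{s_i}a_{i,j}X^{p^j}$ additive, $s_i\ge1$, $a_{i,s_i}\ne0$. Assume moreover $v=2s_n$. Then $s_1=\dots=s_n=:s$ and $V=Z(\mathrm{Ad}_{f_1})$. Furthermore there exist a divisor $d$ of $s$ and elements $\gamma_2,\dots,\gamma_n\in\mathbb F_{p^d}\setminus\mathbb F_p$ such that, writing $S_1(X)=\sum_{j=0}^sa_jX^{p^j}$, one has $a_j=0$ whenever $d\nmid j$ (i.e. $S_1=\sum_{j=0}^{s/d}a_{jd}X^{p^{jd}}$), and $S_i=\gamma_iS_1$ for all $i\in\{2,\dots,n\}$; moreover $1,\gamma_2,\dots,\gamma_n$ are linearly independent over $\mathbb F_p$. In particular $s\ge2$.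
   Context: Big-action setting. Let $k$ be an algebraically closed field of characteristic $p>0$, $C$ a connected nonsingular projective curve over $k$ of genus $g\ge 2$, and $G$ a finite $p$-subgroup of $\mathrm{Aut}_k(C)$ with $|G|/g>2p/(p-1)$ (a ''big action'' $(C,G)$). It is known that there is a point $\infty\in C$ such that $G$ equals its own first (wild) ramification group at $\infty$, that $\infty$ is the only ramification point of $C\to C/G\cong\mathbb P^1_k$, that the second lower ramification group $G_2$ of $G$ at $\infty$ is a nontrivial proper subgroup of $G$ equal to the commutator subgroup $D(G)$, and that $C/G_2\cong\mathbb P^1_k$. Assume $G_2\cong(\mathbb Z/p\mathbb Z)^n$ with $n\ge1$. Put $L=k(C)$ and write $L^{G_2}=k(X)$, where $X$ is a coordinate on $C/G_2$ with pole at the image of $\infty$; then $G/G_2$ acts on $k(X)$ by translations $X\mapsto X+y$, $y$ ranging over an $\mathbb F_p$-subspace $V\subset k$ of dimension $v$, giving an exact sequence $0\to G_2\to G\to V\to 0$, $\sigma\mapsto\sigma(X)-X$. Let $\wp(Z)=Z^p-Z$. A polynomial in $k[X]$ is called reduced if it is a $k$-linear combination of monomials $X^j$ with $p\nmid j$; every $f\in k[X]$ is congruent modulo $\wp(k[X])$ to a unique reduced polynomial. Let $A=(\wp(L)\cap k[X])/\wp(k[X])$, an $n$-dimensional $\mathbb F_p$-vector space, and for $\bar f\in A$ let $\deg\bar f=\min\{\deg(f+\wp(P)):P\in k[X]\}$. Fix an $\mathbb F_p$-basis $\bar f_1,\dots,\bar f_n$ of $A$ with $m_i:=\deg\bar f_i$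 such that (a) $p\nmid m_i$, (b) $m_1\le\dots\le m_n$, (c) for all $(\lambda_1,\dots,\lambda_n)\in\mathbb F_p^n\setminus\{0\}$, $\deg(\sum_i\lambda_i\bar f_i)=\max_i\deg(\lambda_i\bar f_i)$. Let $f_i\in k[X]$ be the reduced representative of $\bar f_i$ (so $\deg f_i=m_i$); then $L=k(X,W_1,\dots,W_n)$ with $W_i^p-W_i=f_i(X)$. Palindromic polynomial: for $f(X)=XS(X)+cX$ with $S(X)=\sum_{j=0}^{s}a_jX^{p^j}$, $s\ge1$, $a_s\ne0$, define the additive polynomial $\mathrm{Ad}_f(X)=\frac1{a_s}\sum_{j=0}^{s}(a_j^{p^s}X^{p^{s+j}}+a_j^{p^{s-j}}X^{p^{s-j}})$, and let $Z(\mathrm{Ad}_f)\subset k$ be its set of roots. $\mathbb F_{p^d}$ denotes the subfield of $k$ with $p^d$ elements. *)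

From HB Require Import structures.
From mathcomp Require Import all_boot all_order all_algebra.
Set Implicit Arguments. Unset Strict Implicit. Unset Printing Implicit Defensive.
Import Order.TTheory GRing.Theory.
Local Open Scope ring_scope.

Section BigAction.
Variable k : fieldType.

Definition wp (p : nat) (P : {poly k}) : {poly k} := P ^+ p - P.

Definition in_wp (p : nat) (Q : {poly k}) : Prop := exists P : {poly k}, Q = wp p P.

Definition reduced (p : nat) (f : {poly k}) : Prop :=
  forall j : nat, (p %| j)%N -> f`_j = 0.

(* m is the degree of the class of f in k[X]/wp(k[X]):
   m = min { deg (f + wp P) : P in k[X] } *)
Definition is_clsdeg (p : nat) (f : {poly k}) (m : nat) : Prop :=
  (exists P : {poly k}, predn (size (f + wp p P)) = m) /\
  (forall P : {poly k}, leq m (predn (size (f + wp p P)))).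

Definition addS (p s : nat) (a : nat -> k) : {poly k} :=
  \sum_(j < s.+1) a j *: 'X^(p ^ j).

(* Ad_f for f = X S(X) + c X, S = addS p s a *)
Definition Ad (p s : nat) (a : nat -> k) : {poly k} :=
  (a s)^-1 *: \sum_(j < s.+1)
     ((a j) ^+ (p ^ s) *: 'X^(p ^ (s + j)) + (a j) ^+ (p ^ (s - j)) *: 'X^(p ^ (s - j))).

Definition inFq (p d : nat) (x : k) : bool := x ^+ (p ^ d) == x.

End BigAction.

From HB Require Import structures.
From mathcomp Require Import all_boot all_order all_algebra.
From mathcomp Require Import ring.
Import Order.TTheory GRing.Theory.
Local Open Scope ring_scope.

Set Implicit Arguments.
Unset Strict Implicit.

(* Proposition 4.2.  Indices are shifted: f_0, ..., f_(n-1) stand for f_1, ..., f_n.  The proof has four steps.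
   1. If f(X + y) - f(X) lies in wp(k[X]), then Ad_f(y) = 0.  This is detected by the
      additive functional ell_N(Q) = sum_(e <= N) Q_(p^e)^(p^(N-e)), which kills
      wp(P) when deg P < p^N and maps f(X + y) - f(X) to (a_s Ad_f(y))^(p^(N-s)).
   2. So the p^v = p^(2 s_(n-1)) elements of V are roots of every Ad_(f_i), which has
      degree p^(2 s_i) with s_i <= s_(n-1).  Counting roots, all s_i equal some s, V is
      the whole root set of Ad_(f_0), and all the Ad_(f_i) coincide (their
      X-coefficient is 1).
   3. Comparing coefficients in Ad_(f_0) = Ad_(f_i) gives S_i = gamma_i S_0, where
      gamma_i = a_(i,s) / a_(0,s) is fixed by x |-> x^(p^j) for every j in the
      support of S_0, hence by x |-> x^(p^d) for d the gcd of that support.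
   4. A relation sum lam_i gamma_i = 0 would make sum lam_i f_i a multiple of X,
      against the degree condition (c); hence 1, gamma_1, ..., gamma_(n-1) are
      independent over F_p, no gamma_i with i > 0 lies in F_p, and s = d = 1 is
      impossible. *)

Section Frobenius.
Variables (R : comNzRingType) (p : nat).
Hypothesis hp : p \in [pchar R].

Lemma pchar_gt1 : (1 < p)%N.
Proof. exact: prime_gt1 (pcharf_prime hp). Qed.

Lemma pchar_natX e : [pchar R].-nat (p ^ e)%N.
Proof. by rewrite (eq_pnat _ (pcharf_eq hp)) pnatX pnat_id // (pcharf_prime hp). Qed.

Lemma frob0 e : 0 ^+ (p ^ e) = 0 :> R.
Proof. by rewrite expr0n expn_eq0 eqn0Ngt (ltnW pchar_gt1). Qed.

Lemma frobD e (x y : R) : (x + y) ^+ (p ^ e) = x ^+ (p ^ e) + y ^+ (p ^ e).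
Proof. exact: exprDn_pchar (pchar_natX e). Qed.

Lemma frobB e (x y : R) : (x - y) ^+ (p ^ e) = x ^+ (p ^ e) - y ^+ (p ^ e).
Proof. by rewrite frobD (exprNn_pchar _ (pchar_natX e)). Qed.

Lemma frob_sum e I (r : seq I) (P : pred I) (F : I -> R) :
  (\sum_(i <- r | P i) F i) ^+ (p ^ e) = \sum_(i <- r | P i) F i ^+ (p ^ e).
Proof. exact: (big_morph _ (frobD e) (frob0 e)). Qed.

End Frobenius.

(* Elements fixed by x |-> x^(p^e) form the subfield F_(p^e); these closure
   properties locate the field generated by the gamma_i. *)
Section FrobeniusFixed.
Variables (F : fieldType) (p : nat).
Hypothesis hp : p \in [pchar F].

Lemma frob_inj e (x y : F) : x ^+ (p ^ e) = y ^+ (p ^ e) -> x = y.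
Proof.
move=> hxy; apply/eqP; rewrite -subr_eq0.
have : (x - y) ^+ (p ^ e) == 0 by rewrite frobB // hxy subrr.
by rewrite expf_eq0 => /andP[].
Qed.

Lemma frob_fixed_mul (x : F) u e : x ^+ (p ^ e) = x -> x ^+ (p ^ (u * e)) = x.
Proof.
move=> hx; elim: u => [|u IH]; first by rewrite expn0 expr1.
by rewrite mulSn expnD exprM hx IH.
Qed.

Lemma frob_fixed_sub (x : F) e e' :
  x ^+ (p ^ e) = x -> x ^+ (p ^ (e + e')) = x -> x ^+ (p ^ e') = x.
Proof.
move=> he hee'; apply: (@frob_inj e).
by rewrite -exprM -expnD addnC hee' he.
Qed.

Lemma frob_fixed_gcd (x : F) e e' :
  x ^+ (p ^ e) = x -> x ^+ (p ^ e') = x -> x ^+ (p ^ gcdn e e') = x.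
Proof.
move=> he he'; have [->|e_gt0] := posnP e; first by rewrite gcd0n.
have [u v def_uv _] := egcdnP e' e_gt0.
by apply: (@frob_fixed_sub _ (v * e')); rewrite -?def_uv frob_fixed_mul.
Qed.

End FrobeniusFixed.

Lemma sum_delta (R : pzSemiRingType) n (G : nat -> R) i :
  \sum_(j < n) G j * (j == i :> nat)%:R = if (i < n)%N then G i else 0.
Proof. by under eq_bigr do rewrite mulr_natr mulrb; rewrite -big_mkcond big_ord1_eq. Qed.

Lemma eq_prod_roots (k : fieldType) (q : {poly k}) (rs : seq k) :
  all (root q) rs -> uniq rs -> size q = (size rs).+1 ->
  q = lead_coef q *: \prod_(z <- rs) ('X - z%:P).
Proof.
move=> hroots hu hsize.
have [r def_q] := uniq_roots_prod_XsubC hroots (etrans (uniq_rootsE rs) hu).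
have hmonic : \prod_(z <- rs) ('X - z%:P) \is monic by apply: monic_prod_XsubC.
have r_neq0 : r != 0 by apply: contra_eq_neq hsize => r0; rewrite def_q r0 mul0r size_poly0.
have size_r : size r = 1%N.
  move: hsize; rewrite def_q size_Mmonic // size_prod_XsubC addnS /=.
  by move=> /(congr1 (subn^~ (size rs))); rewrite addnK subSnn.
rewrite def_q lead_coef_Mmonic // [r]size1_polyC ?size_r // lead_coefC.
by rewrite mul_polyC.
Qed.

Lemma Fp_of_frob_fixed (k : fieldType) p (x : k) : p \in [pchar k] ->
  x ^+ p = x -> exists2 l, (l < p)%N & x = l%:R.
Proof.
move=> hp hx; have p_gt1 := pchar_gt1 hp.
pose rs := [seq (l%:R : k) | l <- iota 0 p].
have inj_nat : {in iota 0 p &, injective (fun l : nat => l%:R : k)}.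
  move=> l1 l2; rewrite !mem_iota !add0n => /andP[_ hl1] /andP[_ hl2] h12.
  wlog le12 : l1 l2 hl1 hl2 h12 / (l1 <= l2)%N.
    by move=> W; case: (leqP l1 l2) => [|/ltnW] h; [|apply/esym]; apply: W.
  have hdvd : (p %| l2 - l1)%N by rewrite (dvdn_pcharf hp) natrB // h12 subrr.
  apply/eqP; rewrite eqn_leq le12 -subn_eq0 /=; apply: contraTT hdvd => hne.
  by rewrite gtnNdvd ?lt0n // (leq_ltn_trans (leq_subr _ _) hl2).
pose q : {poly k} := 'X^p - 'X.
have size_q : size q = p.+1.
  by rewrite size_polyDl ?size_polyXn // size_polyN size_polyX ltnS.
have q_roots : all (root q) rs.
  apply/allP => _ /mapP[l _ ->].
  by rewrite /root !hornerE -(pFrobenius_autE hp) pFrobenius_aut_nat subrr.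
have def_q := eq_prod_roots q_roots (etrans (map_inj_in_uniq inj_nat) (iota_uniq 0 p)).
have : root q x by rewrite /root !hornerE hx subrr.
rewrite def_q ?size_map ?size_iota // rootZ ?lead_coef_eq0 -?size_poly_eq0 ?size_q //.
by rewrite root_prod_XsubC => /mapP[l]; rewrite mem_iota add0n => /andP[_ hl] ->; exists l.
Qed.

Section ShapeOfF.
Variables (k : fieldType) (p : nat).
Hypothesis hp : p \in [pchar k].

Lemma coef_addS_pow s (a : nat -> k) u : (addS p s a)`_(p ^ u) = if (u <= s)%N then a u else 0.
Proof.
rewrite -ltnS -sum_delta coef_sum; apply: eq_bigr => j _.
by rewrite coefZ coefXn eqn_exp2l ?(pchar_gt1 hp) // eq_sym.
Qed.

Lemma coef_addS_big s (a : nat -> k) i : (p ^ s < i)%N -> (addS p s a)`_i = 0.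
Proof.
move=> hi; rewrite coef_sum big1 // => j _; rewrite coefZ coefXn gtn_eqF ?mulr0 //.
by apply: leq_ltn_trans hi; rewrite leq_exp2l ?(pchar_gt1 hp) // -ltnS.
Qed.

Lemma coef_XaddS s (a : nat -> k) c i :
  ('X * addS p s a + c *: 'X)`_i.+1 = (addS p s a)`_i + c * (i == 0)%N%:R.
Proof. by rewrite coefD coefXM coefZ coefX. Qed.

Lemma size_XaddS s (a : nat -> k) c : a s != 0 ->
  size ('X * addS p s a + c *: 'X) = (p ^ s).+2.
Proof.
move=> has; apply/eqP; rewrite eqn_leq; apply/andP; split.
  apply/leq_sizeP => -[|i] //; rewrite ltnS => hi.
  by rewrite coef_XaddS coef_addS_big // gtn_eqF ?mulr0 ?addr0 // (leq_ltn_trans _ hi).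
rewrite ltnNge; apply/negP => /leq_sizeP/(_ _ (leqnn _))/eqP.
rewrite coef_XaddS coef_addS_pow leqnn gtn_eqF ?expn_gt0 ?(ltnW (pchar_gt1 hp)) //.
by rewrite mulr0 addr0 (negbTE has).
Qed.

(* In characteristic 2 a reduced X S(X) + c X has no X^2 term, i.e. a_0 = 0. *)
Lemma reduced_coef0 s (a : nat -> k) c :
  reduced p ('X * addS p s a + c *: 'X) -> (p %| 2)%N -> a 0%N = 0.
Proof.
move=> hred /hred; rewrite coef_XaddS /= mulr0 addr0.
by have := coef_addS_pow s a 0; rewrite expn0 => ->.
Qed.

End ShapeOfF.

(* It is additive, kills constants, and kills wp(P) whenever deg P < p^N: it is
   the obstruction to lying in wp(k[X]) that detects the roots of Ad_f. *)
Definition ell (k : fieldType) (p N : nat) (Q : {poly k}) : k :=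
  \sum_(e < N.+1) Q`_(p ^ e) ^+ (p ^ (N - e)).

Section Obstruction.
Variables (k : fieldType) (p N : nat).
Hypothesis hp : p \in [pchar k].

Lemma ellD (Q Q' : {poly k}) : ell p N (Q + Q') = ell p N Q + ell p N Q'.
Proof. by rewrite -big_split; apply: eq_bigr => e _; rewrite coefD frobD. Qed.

Lemma ellB (Q Q' : {poly k}) : ell p N (Q - Q') = ell p N Q - ell p N Q'.
Proof. by rewrite -sumrB; apply: eq_bigr => e _; rewrite coefB frobB. Qed.

Lemma ellC (c : k) : ell p N c%:P = 0.
Proof.
rewrite /ell big1 // => e _.
by rewrite coefC expn_eq0 eqn0Ngt (ltnW (pchar_gt1 hp)) frob0.
Qed.

Lemma ell_sum I (r : seq I) (P : pred I) (F : I -> {poly k}) :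
  ell p N (\sum_(i <- r | P i) F i) = \sum_(i <- r | P i) ell p N (F i).
Proof. by apply: (big_morph _ ellD); rewrite -polyC0 ellC. Qed.

Lemma ell_monomial (c : k) m :
  ell p N (c *: 'X^m) = \sum_(e < N.+1) c ^+ (p ^ (N - e)) * (m == p ^ e)%N%:R.
Proof.
apply: eq_bigr => e _; rewrite coefZ coefXn eq_sym.
by case: eqP => _; rewrite ?mulr1 // !mulr0 frob0.
Qed.

Lemma ell_Xpow (c : k) j : (j <= N)%N -> ell p N (c *: 'X^(p ^ j)) = c ^+ (p ^ (N - j)).
Proof.
move=> hj; rewrite ell_monomial.
have := sum_delta N.+1 (fun e => c ^+ (p ^ (N - e))) j; rewrite ltnS hj => <-.
by apply: eq_bigr => e _; rewrite eqn_exp2l ?(pchar_gt1 hp) // eq_sym.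
Qed.

(* The Frobenius shift behind the telescoping: for m < p^N, raising c X^m to the
   p-th power moves each term of ell_N one step without changing the total. *)
Lemma ell_frob_monomial (c : k) m : (m < p ^ N)%N ->
  ell p N ((c *: 'X^m) ^+ p) = ell p N (c *: 'X^m).
Proof.
move=> hm; have p_gt1 := pchar_gt1 hp; have p_gt0 := ltnW p_gt1.
rewrite exprZn -exprM !ell_monomial big_ord_recl big_ord_recr /=.
rewrite expn0 muln_eq1 (gtn_eqF p_gt1) andbF (ltn_eqF hm) !mulr0 add0r addr0.
apply: eq_bigr => e _; rewrite /bump /= add1n expnSr eqn_pmul2r //.
by rewrite -exprM -expnS subnS prednK // subn_gt0.
Qed.

Lemma ell_wp (P : {poly k}) : (size P <= p ^ N)%N -> ell p N (wp p P) = 0.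
Proof.
move=> hP; have hpP : p \in [pchar {poly k}] by rewrite pchar_poly.
rewrite /wp -{1 2}(coefK P) poly_def -[p in _ ^+ p]expn1 frob_sum //.
rewrite ellB // !ell_sum -sumrB big1 // => i _.
by rewrite expn1 ell_frob_monomial ?subrr // (leq_trans (ltn_ord i) hP).
Qed.

End Obstruction.

Section Translation.
Variables (k : fieldType) (p : nat).
Hypothesis hp : p \in [pchar k].

Lemma horner_addS s (a : nat -> k) (y : k) :
  (addS p s a).[y] = \sum_(j < s.+1) a j * y ^+ (p ^ j).
Proof. by rewrite horner_sum; apply: eq_bigr => j _; rewrite hornerZ hornerXn. Qed.

Lemma addS_translate s (a : nat -> k) (y : k) :
  addS p s a \Po ('X + y%:P) = addS p s a + (addS p s a).[y]%:P.
Proof.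
have hpP : p \in [pchar {poly k}] by rewrite pchar_poly.
rewrite horner_addS /addS !rmorph_sum -big_split; apply: eq_bigr => j _ /=.
rewrite comp_polyZ rmorphXn /= comp_polyX frobD // -polyC_exp.
by rewrite scalerDr polyCM mul_polyC.
Qed.

Lemma XS_translate (T : {poly k}) (t c y : k) :
  T \Po ('X + y%:P) = T + t%:P ->
  ('X * T + c *: 'X) \Po ('X + y%:P) - ('X * T + c *: 'X)
    = y *: T + t *: 'X + (y * t + c * y)%:P.
Proof.
move=> hT; rewrite comp_polyD comp_polyM comp_polyZ comp_polyX hT.
by rewrite -!mul_polyC polyCD !polyCM; ring.
Qed.

Lemma ell_translate s N (a : nat -> k) (c y : k) : (s <= N)%N ->
  ell p N (('X * addS p s a + c *: 'X) \Po ('X + y%:P) - ('X * addS p s a + c *: 'X))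
  = \sum_(j < s.+1) (y * a j) ^+ (p ^ (N - j)) + (addS p s a).[y] ^+ (p ^ N).
Proof.
move=> hsN; rewrite (XS_translate c (addS_translate s a y)) !ellD // ellC // addr0.
rewrite -[in X in _ + ell _ _ (_ *: X)](expr1 'X) -[1%N](expn0 p) ell_Xpow // subn0.
congr (_ + _); rewrite /addS scaler_sumr ell_sum //; apply: eq_bigr => j _.
by rewrite scalerA ell_Xpow // (leq_trans _ hsN) // -ltnS.
Qed.

Lemma horner_Ad s N (a : nat -> k) (y : k) : (s <= N)%N -> a s != 0 ->
  (a s * (Ad p s a).[y]) ^+ (p ^ (N - s))
  = \sum_(j < s.+1) (y * a j) ^+ (p ^ (N - j)) + (addS p s a).[y] ^+ (p ^ N).
Proof.
move=> hsN has; rewrite /Ad hornerZ mulVKf // horner_sum horner_addS !frob_sum //.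
rewrite -big_split /=; apply: eq_bigr => j _; have hjs : (j <= s)%N by rewrite -ltnS.
rewrite hornerD !hornerZ !hornerXn frobD // [in RHS]addrC [y * _]mulrC !exprMn.
rewrite -!exprM -!expnD subnKC //.
have -> : (s + j + (N - s) = j + N)%N by rewrite addnAC subnKC // addnC.
by have -> : (s - j + (N - s) = N - j)%N by rewrite addnC addnBA // subnK.
Qed.

(* Step 1 of the proposition: if f(X + y) - f(X) lies in wp(k[X]), then y is a
   root of Ad_f.  Apply ell_N with N large enough to kill the wp-part. *)
Lemma root_Ad_of_translate s (a : nat -> k) (c y : k) : a s != 0 ->
  in_wp p (('X * addS p s a + c *: 'X) \Po ('X + y%:P) - ('X * addS p s a + c *: 'X)) ->
  root (Ad p s a) y.
Proof.
move=> has [P hP]; pose N := (s + size P)%N.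
have hsN : (s <= N)%N by rewrite leq_addr.
have hPN : (size P <= p ^ N)%N.
  apply: leq_trans (ltnW (ltn_expl _ (pchar_gt1 hp))) _.
  by rewrite leq_exp2l ?leq_addl // (pchar_gt1 hp).
have := ell_translate a c y hsN; rewrite hP ell_wp // -horner_Ad //.
by move/esym/eqP; rewrite expf_eq0 mulf_eq0 (negbTE has) => /andP[_].
Qed.

End Translation.

Section AdCoefficients.
Variables (k : fieldType) (p : nat).
Hypothesis hp : p \in [pchar k].

Lemma Ad_coef s (a : nat -> k) i : (Ad p s a)`_i = (a s)^-1 * \sum_(j < s.+1)
  (a j ^+ (p ^ s) * (i == p ^ (s + j))%N%:R + a j ^+ (p ^ (s - j)) * (i == p ^ (s - j))%N%:R).
Proof.
rewrite /Ad coefZ coef_sum; congr (_ * _); apply: eq_bigr => j _.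
by rewrite coefD !coefZ !coefXn.
Qed.

Lemma Ad_coef_pow s (a : nat -> k) t : (Ad p s a)`_(p ^ t) = (a s)^-1 *
  ((if (s <= t <= s + s)%N then a (t - s)%N ^+ (p ^ s) else 0) +
   (if (t <= s)%N then a (s - t)%N ^+ (p ^ t) else 0)).
Proof.
have p_gt1 := pchar_gt1 hp.
rewrite Ad_coef big_split /=; congr (_ * (_ + _)).
  have [hst|hts] /= := leqP s t; last first.
    rewrite big1 // => j _; rewrite eqn_exp2l // ltn_eqF ?mulr0 //.
    exact: leq_trans hts (leq_addr _ _).
  have := sum_delta s.+1 (fun j => a j ^+ (p ^ s)) (t - s).
  rewrite ltnS leq_subLR => <-; apply: eq_bigr => j _.
  by rewrite eqn_exp2l // -{1}(subnKC hst) eqn_add2l eq_sym.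
have [hts|hst] := leqP t s; last first.
  rewrite big1 // => j _; rewrite eqn_exp2l // gtn_eqF ?mulr0 //.
  exact: leq_ltn_trans (leq_subr _ _) hst.
have := sum_delta s.+1 (fun j => a j ^+ (p ^ (s - j))) (s - t).
rewrite ltnS leq_subr subKn // => <-; apply: eq_bigr => j _.
have hjs : (j <= s)%N by rewrite -ltnS.
by rewrite eqn_exp2l //; congr (_ * (nat_of_bool _)%:R); apply/eqP/eqP => ->; rewrite subKn.
Qed.

Variables (s : nat) (a : nat -> k).
Hypotheses (hs : (1 <= s)%N) (has : a s != 0).

Lemma Ad_coef1 : (Ad p s a)`_1 = 1.
Proof.
by rewrite -(expn0 p) Ad_coef_pow leqn0 (gtn_eqF hs) /= subn0 expn0 expr1 add0r mulVf.
Qed.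

Lemma Ad_coef_hi j : (1 <= j <= s)%N ->
  (Ad p s a)`_(p ^ (s + j)) = (a s)^-1 * a j ^+ (p ^ s).
Proof.
case/andP => hj1 hjs; rewrite Ad_coef_pow leq_addr leq_add2l hjs addKn.
by rewrite leqNgt -addn1 leq_add2l hj1 addr0.
Qed.

Lemma Ad_coef_mid : (Ad p s a)`_(p ^ s) = (a s)^-1 * (a 0%N ^+ (p ^ s) *+ 2).
Proof. by rewrite Ad_coef_pow leqnn leq_addr subnn mulr2n. Qed.

Lemma Ad_coef_lo j : (1 <= j <= s)%N ->
  (Ad p s a)`_(p ^ (s - j)) = (a s)^-1 * a j ^+ (p ^ (s - j)).
Proof.
case/andP => hj1 hjs; rewrite Ad_coef_pow leq_subr subKn //.
by rewrite leqNgt ltn_subrL hj1 (leq_trans hj1 hjs) add0r.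
Qed.

Lemma size_Ad : size (Ad p s a) = (p ^ (s + s)).+1.
Proof.
have p_gt1 := pchar_gt1 hp.
apply/eqP; rewrite eqn_leq; apply/andP; split.
  apply/leq_sizeP => i hi; rewrite Ad_coef big1 ?mulr0 // => j _.
  have hjs : (j <= s)%N by rewrite -ltnS.
  rewrite !gtn_eqF ?mulr0 ?addr0 //; apply: leq_trans hi; rewrite ltnS leq_exp2l //.
    exact: leq_trans (leq_subr _ _) (leq_addr _ _).
  by rewrite leq_add2l.
rewrite ltnNge; apply/negP => /leq_sizeP/(_ _ (leqnn _))/eqP.
by rewrite Ad_coef_hi ?hs ?leqnn // mulf_eq0 invr_eq0 expf_eq0 (negbTE has) andbF.
Qed.

End AdCoefficients.

Section AdRoots.
Variables (k : fieldType) (p : nat) (V : seq k).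
Hypotheses (hp : p \in [pchar k]) (hVuniq : uniq V).

Lemma Ad_neq0 s (a : nat -> k) : (1 <= s)%N -> a s != 0 -> Ad p s a != 0.
Proof. by move=> hs has; rewrite -size_poly_eq0 size_Ad. Qed.

Lemma card_roots_Ad s (a : nat -> k) : (1 <= s)%N -> a s != 0 ->
  (forall y, y \in V -> root (Ad p s a) y) -> (size V <= p ^ (s + s))%N.
Proof.
move=> hs has hV; rewrite -ltnS -(size_Ad hp hs has).
by apply: max_poly_roots (Ad_neq0 hs has) _ hVuniq; apply/allP.
Qed.

Variable s : nat.
Hypotheses (hs : (1 <= s)%N) (hVsize : size V = (p ^ (s + s))%N).

Lemma Ad_prod_roots (a : nat -> k) : a s != 0 ->
  (forall y, y \in V -> root (Ad p s a) y) ->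
  Ad p s a = lead_coef (Ad p s a) *: \prod_(z <- V) ('X - z%:P).
Proof.
by move=> has hV; apply: eq_prod_roots hVuniq _; [apply/allP | rewrite size_Ad ?hVsize].
Qed.

Lemma root_Ad_mem (a : nat -> k) (y : k) : a s != 0 ->
  (forall y, y \in V -> root (Ad p s a) y) -> root (Ad p s a) y -> y \in V.
Proof.
move=> has hV; rewrite (Ad_prod_roots has hV) rootZ ?lead_coef_eq0 ?Ad_neq0 //.
by rewrite root_prod_XsubC.
Qed.

(* ... and since the coefficient of X in Ad_f is 1, Ad_f is determined by V. *)
Lemma Ad_eq_of_common_roots (a b : nat -> k) : a s != 0 -> b s != 0 ->
  (forall y, y \in V -> root (Ad p s a) y) -> (forall y, y \in V -> root (Ad p s b) y) ->
  Ad p s a = Ad p s b.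
Proof.
move=> has hbs hVa hVb; rewrite (Ad_prod_roots has hVa) (Ad_prod_roots hbs hVb).
have hcoef1 c : c s != 0 -> (forall y, y \in V -> root (Ad p s c) y) ->
    lead_coef (Ad p s c) * (\prod_(z <- V) ('X - z%:P))`_1 = 1.
  by move=> hcs hVc; rewrite -coefZ -Ad_prod_roots // Ad_coef1.
have hP1 : (\prod_(z <- V) ('X - z%:P))`_1 != 0.
  by apply: contra_eq_neq (hcoef1 _ has hVa) => ->; rewrite mulr0 eq_sym oner_neq0.
by congr (_ *: _); apply: (mulIf hP1); rewrite !hcoef1.
Qed.

End AdRoots.

Lemma s_le_last p n (s m : nat -> nat) i : (1 < p)%N ->
  (forall i j, (i <= j < n)%N -> (m i <= m j)%N) ->
  (forall i, (i < n)%N -> m i = (p ^ s i).+1) ->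
  (i < n)%N -> (s i <= s n.-1)%N.
Proof.
move=> p_gt1 hb hm hi; have hn1 : (n.-1 < n)%N by rewrite ltn_predL (leq_ltn_trans (leq0n i) hi).
have hin : (i <= n.-1 < n)%N by rewrite -ltnS (ltn_predK hi) hi /=.
by have := hb _ _ hin; rewrite !hm // ltnS leq_exp2l.
Qed.

Definition support_gcd (k : fieldType) (s : nat) (a : nat -> k) : nat :=
  \big[gcdn/0%N]_(j < s.+1 | a j != 0) j.

Lemma support_gcd_dvd (k : fieldType) s (a : nat -> k) j :
  (j <= s)%N -> a j != 0 -> (support_gcd s a %| j)%N.
Proof. by rewrite -ltnS => hj haj; apply: (biggcdn_inf (Ordinal hj)). Qed.

Lemma div_eq_scale (k : fieldType) (u w x y : k) :
  w != 0 -> u^-1 * x = w^-1 * y -> y = w / u * x.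
Proof. by move=> hw h; rewrite -(mulVKf hw y) -h mulrA. Qed.

Section ProportionalAd.
Variables (k : fieldType) (p s : nat) (a b : nat -> k).
Hypotheses (hp : p \in [pchar k]) (has : a s != 0) (hbs : b s != 0).
Hypothesis hAd : Ad p s a = Ad p s b.
(* In characteristic 2 the middle coefficient 2 a_0^(p^s) of Ad_f carries no
   information; there the reduced shape of f forces a_0 = 0 instead. *)
Hypothesis hmid : (p %| 2)%N -> a 0%N = 0 /\ b 0%N = 0.

(* Comparing the coefficients of X^(p^(s+j)) (and of X^(p^s) for j = 0). *)
Lemma frob_coef_ratio j : (j <= s)%N -> b j ^+ (p ^ s) = b s / a s * a j ^+ (p ^ s).
Proof.
move=> hjs; apply: div_eq_scale => //.
have [->|hj0] := posnP j; last first.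
  by rewrite -!Ad_coef_hi ?hj0 ?hAd.
have [/hmid[-> ->]|hp2] := boolP (p %| 2)%N; first by rewrite frob0 // !mulr0.
have h2 : (2%:R : k) != 0 by rewrite -(dvdn_pcharf hp).
apply: (mulIf h2); rewrite -!mulrA !mulr_natr -!Ad_coef_mid //.
by rewrite hAd.
Qed.

Lemma ratio_frob_s : (b s / a s) ^+ (p ^ s) = b s / a s.
Proof.
have has' : a s ^+ (p ^ s) != 0 by rewrite expf_neq0.
apply: (mulIf has'); rewrite -exprMn divfK //.
exact: frob_coef_ratio.
Qed.

(* Coefficientwise b_j = gamma a_j, since the Frobenius is injective. *)
Lemma coef_ratio j : (j <= s)%N -> b j = b s / a s * a j.
Proof.
by move=> hjs; apply: (frob_inj hp (e := s)); rewrite exprMn ratio_frob_s frob_coef_ratio.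
Qed.

(* Comparing the coefficients of X^(p^(s-j)): gamma is fixed by the p^j-th
   power Frobenius for every j in the support of a. *)
Lemma ratio_frob_support j : (1 <= j <= s)%N -> a j != 0 -> (b s / a s) ^+ (p ^ j) = b s / a s.
Proof.
move=> hj haj; have hjs : (j <= s)%N by case/andP: hj.
have : (a s)^-1 * a j ^+ (p ^ (s - j)) = (b s)^-1 * b j ^+ (p ^ (s - j)).
  by rewrite -!Ad_coef_lo ?hAd.
move=> /(div_eq_scale hbs); rewrite coef_ratio // exprMn => /(mulIf (expf_neq0 _ haj)) hfix.
by apply: (frob_fixed_sub hp (e := s - j)); rewrite ?subnK ?ratio_frob_s.
Qed.

Lemma ratio_frob_gcd : (b s / a s) ^+ (p ^ support_gcd s a) = b s / a s.
Proof.
rewrite /support_gcd; elim/big_ind: _ => [|e e'|j haj].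
- by rewrite expn0 expr1.
- by move=> h1 h2; apply: (frob_fixed_gcd hp h1 h2).
- have [hj0|hj0] := posnP j; first by rewrite hj0 expn0 expr1.
  by apply: ratio_frob_support; rewrite // hj0 -ltnS /=.
Qed.

Lemma addS_ratio : addS p s b = (b s / a s) *: addS p s a.
Proof.
rewrite /addS scaler_sumr; apply: eq_bigr => j _.
by rewrite scalerA -coef_ratio // -ltnS.
Qed.

End ProportionalAd.

Lemma clsdeg_le_size (k : fieldType) p (f : {poly k}) m :
  (0 < p)%N -> is_clsdeg p f m -> (m <= (size f).-1)%N.
Proof. by move=> p_gt0 [_ /(_ 0)]; rewrite /wp expr0n gtn_eqF //= subr0 addr0. Qed.

(* Linear independence of the proportionality factors: if f_i = X (gamma_i T) + c_i X
   and sum lam_i gamma_i = 0, then sum lam_i f_i is a multiple of X, of class degree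
   at most 1, whereas by condition (c) that class degree is some m_i >= 2. *)
Lemma ratios_indep (k : fieldType) p n (f : nat -> {poly k}) (m : nat -> nat)
    (T : {poly k}) (gamma c : nat -> k) :
  (0 < p)%N ->
  (forall lam : nat -> nat, (forall i, (i < n)%N -> (lam i < p)%N) ->
     (exists2 i, (i < n)%N & lam i != 0%N) ->
     is_clsdeg p (\sum_(i < n) (lam i)%:R *: f i) (\max_(i < n | lam i != 0%N) m i)) ->
  (forall i, (i < n)%N -> f i = 'X * (gamma i *: T) + c i *: 'X) ->
  (forall i, (i < n)%N -> (2 <= m i)%N) ->
  forall lam : nat -> nat, (forall i, (i < n)%N -> (lam i < p)%N) ->
  \sum_(i < n) (lam i)%:R * gamma i = 0 -> forall i, (i < n)%N -> lam i = 0%N.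
Proof.
move=> p_gt0 hc hf hm lam hlam hsum i hi; apply/eqP/negPn/negP => hne.
have hcomb : \sum_(j < n) (lam j)%:R *: f j = (\sum_(j < n) (lam j)%:R * c j) *: 'X.
  rewrite (eq_bigr (fun j : 'I_n =>
      ((lam j)%:R * gamma j) *: ('X * T) + ((lam j)%:R * c j) *: 'X)).
    by rewrite big_split /= -!scaler_suml hsum scale0r add0r.
  by move=> j _; rewrite hf // scalerDr -scalerAr !scalerA.
have := clsdeg_le_size p_gt0 (hc lam hlam (ex_intro2 _ _ i hi hne)).
rewrite hcomb => hle.
have hmax := leq_bigmax_cond (P := fun j : 'I_n => lam j != 0%N)
  (F := fun j : 'I_n => m j) (Ordinal hi) hne.
have hX : ((size ((\sum_(j < n) (lam j)%:R * c j) *: 'X : {poly k})).-1 <= 1)%N.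
  by rewrite -subn1 leq_subLR (leq_trans (size_scale_leq _ _)) ?size_polyX.
by have := leq_trans (hm i hi) (leq_trans hmax (leq_trans hle hX)).
Qed.

(* With gamma_0 = 1, independence of the gamma_i over F_p forces gamma_i notin F_p:
   gamma_i = l would give the relation (p - l) gamma_0 + gamma_i = 0. *)
Lemma notFp_of_indep (k : fieldType) p n (gamma : nat -> k) i :
  p \in [pchar k] -> gamma 0%N = 1 ->
  (forall lam : nat -> nat, (forall j, (j < n)%N -> (lam j < p)%N) ->
     \sum_(j < n) (lam j)%:R * gamma j = 0 -> forall j, (j < n)%N -> lam j = 0%N) ->
  (0 < i < n)%N -> ~~ inFq p 1 (gamma i).
Proof.
move=> hp hg0 hindep /andP[hi0 hin]; have p_gt1 := pchar_gt1 hp.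
rewrite /inFq expn1; apply/negP => /eqP/(Fp_of_frob_fixed hp)[l hl hgl].
pose q := ((p - l) %% p)%N; pose lam j := ((j == i) + (j == 0%N) * q)%N.
have hlam j : (j < n)%N -> (lam j < p)%N.
  move=> _; rewrite /lam; have [->|_] := eqVneq j i; first by rewrite (gtn_eqF hi0).
  by case: (j == 0%N); rewrite ?mul1n ?ltn_pmod ?(ltnW p_gt1).
suff hsum : \sum_(j < n) (lam j)%:R * gamma j = 0.
  by move: (hindep lam hlam hsum i hin); rewrite /lam eqxx (gtn_eqF hi0).
rewrite (eq_bigr (fun j : 'I_n => gamma j * (j == i :> nat)%:R +
                                  q%:R * gamma j * (j == 0%N :> nat)%:R)); last first.
  by move=> j _; rewrite natrD natrM; ring.
rewrite big_split /= sum_delta (sum_delta n (fun j => q%:R * gamma j)) hin (leq_ltn_trans _ hin) //.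
by rewrite hg0 mulr1 hgl (GRing.natr_mod_pchar hp) -natrD subnKC ?pcharf0 // ltnW.
Qed.

Unset Implicit Arguments.

Theorem proposition4p2
  (k : closedFieldType) (p : nat) (hp : p \in [pchar k])
  (n : nat) (hn : (2 <= n)%N)
  (* V : the F_p-subspace of k (additive subgroup) of dimension v *)
  (V : seq k) (v : nat)
  (hVuniq : uniq V) (hV0 : 0 \in V)
  (hVadd : forall x y, x \in V -> y \in V -> x + y \in V)
  (hVsize : size V = (p ^ v)%N)
  (* f_i (i = 0..n-1 stands for i = 1..n), reduced representatives *)
  (f : nat -> {poly k}) (m : nat -> nat)
  (hred : forall i, (i < n)%N -> reduced p (f i))
  (hdeg : forall i, (i < n)%N -> is_clsdeg p (f i) (m i))
  (hsize : forall i, (i < n)%N -> size (f i) = (m i).+1)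
  (ha : forall i, (i < n)%N -> ~~ (p %| m i)%N)
  (hb : forall i j, (i <= j < n)%N -> (m i <= m j)%N)
  (hc : forall lam : nat -> nat, (forall i, (i < n)%N -> (lam i < p)%N) ->
        (exists2 i, (i < n)%N & lam i != 0%N) ->
        is_clsdeg p (\sum_(i < n) (lam i)%:R *: f i)
                    (\max_(i < n | lam i != 0%N) m i))
  (* translation invariance *)
  (htrans : forall i y, (i < n)%N -> y \in V ->
            in_wp p (f i \Po ('X + y%:P) - f i))
  (* the resulting shape f_i = X S_i(X) + c_i X *)
  (s : nat -> nat) (a : nat -> nat -> k) (c : nat -> k)
  (hform : forall i, (i < n)%N -> f i = 'X * addS p (s i) (a i) + c i *: 'X)
  (hs1 : forall i, (i < n)%N -> (1 <= s i)%N)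
  (hlead : forall i, (i < n)%N -> a i (s i) != 0)
  (hv : v = (2 * s n.-1)%N) :
  (forall i, (i < n)%N -> s i = s 0%N) /\
  (forall y : k, y \in V <-> root (Ad p (s 0%N) (a 0%N)) y) /\
  (exists d : nat, (d %| s 0%N)%N /\
     exists gamma : nat -> k,
       (forall i, (1 <= i < n)%N -> inFq p d (gamma i) /\ ~~ inFq p 1 (gamma i)) /\
       (forall j, (j <= s 0%N)%N -> ~~ (d %| j)%N -> a 0%N j = 0) /\
       (forall i, (1 <= i < n)%N -> addS p (s i) (a i) = gamma i *: addS p (s 0%N) (a 0%N)) /\
       (forall lam : nat -> nat, (forall i, (i < n)%N -> (lam i < p)%N) ->
          (lam 0%N)%:R + \sum_(1 <= i < n) (lam i)%:R * gamma i = 0 ->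
          forall i, (i < n)%N -> lam i = 0%N)) /\
  (2 <= s 0%N)%N.
Proof.
have p_gt1 := pchar_gt1 hp; have hn0 : (0 < n)%N by apply: leq_trans hn.
set S := s n.-1.
have hroot i y : (i < n)%N -> y \in V -> root (Ad p (s i) (a i)) y.
  move=> hi hy; apply: (root_Ad_of_translate hp (hlead i hi) (c := c i)).
  by rewrite -hform //; apply: htrans.
(* Step 2: the s_i are at most S, and counting the roots in V they are at least S. *)
have hm i : (i < n)%N -> m i = (p ^ s i).+1.
  by move=> hi; apply: succn_inj; rewrite -hsize // hform // size_XaddS // hlead.
have hVS : size V = (p ^ (S + S))%N by rewrite hVsize hv mul2n addnn.
have hsS i : (i < n)%N -> s i = S.
  move=> hi; apply/eqP; rewrite eqn_leq (s_le_last p_gt1 hb hm hi) /=.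
  have := card_roots_Ad hp hVuniq (hs1 i hi) (hlead i hi) (hroot i ^~ hi).
  by rewrite hVS leq_exp2l // !addnn leq_double.
have hS1 : (1 <= S)%N by rewrite -(hsS 0%N hn0) hs1.
have hlS i : (i < n)%N -> a i S != 0 by move=> hi; rewrite -(hsS i hi) hlead.
have hrootS i : (i < n)%N -> forall y, y \in V -> root (Ad p S (a i)) y.
  by move=> hi y; rewrite -(hsS i hi); apply: hroot.
have hAd i : (i < n)%N -> Ad p S (a 0%N) = Ad p S (a i).
  by move=> hi; apply: (Ad_eq_of_common_roots hp hVuniq hS1 hVS (hlS _ hn0) (hlS _ hi));
    apply: hrootS.
have ha0 i : (i < n)%N -> (p %| 2)%N -> a i 0%N = 0.
  by move=> hi; apply: (reduced_coef0 hp (s := s i) (c := c i)); rewrite -hform //; apply: hred.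
have hmid i : (i < n)%N -> (p %| 2)%N -> a 0%N 0%N = 0 /\ a i 0%N = 0.
  by move=> hi h2; rewrite !ha0.
pose gamma i := a i S / a 0%N S; pose d := support_gcd S (a 0%N).
have hscale i : (i < n)%N -> addS p (s i) (a i) = gamma i *: addS p S (a 0%N).
  by move=> hi; rewrite hsS // (addS_ratio hp (hlS _ hn0) (hlS _ hi) (hAd i hi) (hmid i hi)).
have hgd i : (i < n)%N -> inFq p d (gamma i).
  by move=> hi; rewrite /inFq (ratio_frob_gcd hp (hlS _ hn0) (hlS _ hi) (hAd i hi) (hmid i hi)).
have hg0 : gamma 0%N = 1 by rewrite /gamma divff ?hlS.
have hform0 i : (i < n)%N -> f i = 'X * (gamma i *: addS p S (a 0%N)) + c i *: 'X.
  by move=> hi; rewrite hform // hscale.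
have hm2 i : (i < n)%N -> (2 <= m i)%N by move=> hi; rewrite hm // ltnS expn_gt0 ltnW.
have hindep := ratios_indep (ltnW p_gt1) hc hform0 hm2.
have hnotFp i : (0 < i < n)%N -> ~~ inFq p 1 (gamma i) := notFp_of_indep hp hg0 hindep.
have hdS : (d %| S)%N by apply: support_gcd_dvd; rewrite ?hlS.
have hs0 : s 0%N = S by apply: hsS.
split; first by move=> i hi; rewrite !hsS.
split.
  move=> y; split => [/(hroot _ _ hn0) // | ]; rewrite hs0.
  exact: (root_Ad_mem hp hVuniq hS1 hVS (hlS _ hn0) (hrootS _ hn0)).
split; last first.
  rewrite hs0 ltnNge; apply/negP => hS.
  have hd1 : d = 1%N by apply/eqP; rewrite -dvdn1 -(eqP (_ : S == 1%N)) // eqn_leq hS hS1.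
  have := hgd 1%N hn; rewrite hd1 => hg1.
  by have := hnotFp 1%N; rewrite hn hg1 => /(_ isT).
exists d; split; first by rewrite hs0.
exists gamma; split.
  by move=> i /andP[hi1 hi]; split; [apply: hgd | apply: hnotFp; rewrite hi1].
split; first by move=> j; rewrite hs0 => hj hdj; apply: contraNeq hdj; apply: support_gcd_dvd.
split; first by move=> i /andP[_ hi]; rewrite hscale // hs0.
move=> lam hlam hsum; apply: hindep => //.
by rewrite -(big_mkord xpredT (fun i => (lam i)%:R * gamma i)) big_ltn // hg0 mulr1.
Qed.
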